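(* Let $i,i+(r-a),\ldots,i+s(r-a)$ be an $L$-brick. The restriction of the divisor $Z_{i+s(r-a)}$ to the $L$-resolution is equal to the divisor $Z^L_i$. If $i,i+a,\ldots,i+sa$ is an $R$-brick, then the restriction of the divisor $Z_i$ to the $R$-resolution is equal to the divisor $Z^R_i$.
   Context: Let $0<a<r$ be coprime integers, $b$ the inverse of $a$ modulo $r$, and for integers $s,t$ let $(s \bmod t)$ denote the least non-negative integer $u$ with $t\mid s-u$. Let $N=\mathbb{Z}^3+\mathbb{Z}\frac1r(1,a,r-a)$, and $p_i=\frac1r\big((-ib \bmod r),\,r-i,\,i\big)$ for $i=0,\ldots,r$ (so $p_0=e_2$, $p_r=e_3$, $p_{r-a}=\frac1r(1,a,r-a)$). The Danilov resolution of the toric singularity $\frac1r(1,a,r-a)$ (cone $\langle e_1,e_2,e_3\rangle$ in $N$) is obtained by the weighted blow-up at $p_{r-a}$ followed recursively by the Danilov resolutions of the cones $\langle e_1,e_2,p_{r-a}\rangle$ and $\langle e_1,e_3,p_{r-a}\rangle$, which are toric singularities of type $\frac{1}{r-a}(1,(r \bmod (r-a)),(-r \bmod (r-a)))$ and $\frac1a(1,(-r \bmod a),(r \bmod a))$ respectively (via lattice isomorphisms fixing $e_1$ and sending the last, resp. second, basis vector to $p_{r-a}$). The resolutions of these two subcones are called the $L$-resolution and the $R$-resolution. Let $D_k$ be the toric divisor of the ray through $p_k$. The permutation $\tau(r,a,\cdot)$ of $\{0,\ldots,r-1\}$ is defined recursively: if $a\in\{1,r-1\}$, $\tau(r,a,i)=(ai-1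 \bmod r)$; otherwise $\tau(r,a,i)=\tau(r-a,(r\bmod (r-a)),(i \bmod (r-a)))$ if $i\ge a$, and $\tau(r,a,i)=(r-a)+\tau(a,(-r \bmod a),i)$ if $i<a$. Set $Z_i=\sum_{k=\tau(r,a,i)+1}^{r}D_k$ for $i=0,\ldots,r-1$. The divisors $Z^L_i$ (resp. $Z^R_i$) on the $L$- (resp. $R$-)resolution are defined by the same formula with $(r,a)$ replaced by $(r-a,(r\bmod(r-a)))$ (resp. $(a,(-r\bmod a))$). A sequence $i,i+(r-a),\ldots,i+s(r-a)$ is an $L$-brick if $i<r-a$, $i+(s+1)(r-a)>r$ and every term is $<r$; a sequence $i,i+a,\ldots,i+sa$ is an $R$-brick if $i<a$, $i+(s+1)a>r$ and every term is $<r$. *)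

From mathcomp Require Import all_boot all_order all_algebra.
Set Implicit Arguments. Unset Strict Implicit. Unset Printing Implicit Defensive.
Import Order.TTheory GRing.Theory Num.Theory.

(* Vectors of N_Q = Q^3 (the lattice N lives inside it). *)
Definition vec := (rat * rat * rat)%type.

Local Open Scope ring_scope.
Definition vadd (v w : vec) : vec := (v.1.1 + w.1.1, v.1.2 + w.1.2, v.2 + w.2).
Definition vscale (c : rat) (v : vec) : vec := (c * v.1.1, c * v.1.2, c * v.2).
Definition e1 : vec := (1, 0, 0).
Definition e2 : vec := (0, 1, 0).
Definition e3 : vec := (0, 0, 1).
Local Close Scope ring_scope.

Definition modinv (r a : nat) : nat :=
  find (fun b => (a * b) %% r == 1 %% r) (iota 0 r).

Definition negmod (n t : nat) : nat := (t - n %% t) %% t.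

(* p_i = 1/r ((-ib mod r), r-i, i) for the singularity 1/r(1,a,r-a) *)
Definition pt (r a i : nat) : vec :=
  (((negmod (i * modinv r a) r)%:R / r%:R)%R,
   ((r - i)%:R / r%:R)%R, (i%:R / r%:R)%R).

(* the permutation tau(r,a,.) ; fuel-based recursion (fuel = r suffices,
   since both recursive calls strictly decrease r when 0 < a < r). *)
Fixpoint tau_fuel (n r a i : nat) : nat :=
  match n with
  | 0 => 0
  | n'.+1 =>
    if (a == 1) || (a == r - 1) then (a * i + r - 1) %% r
    else if a <= i then tau_fuel n' (r - a) (r %% (r - a)) (i %% (r - a))
    else (r - a) + tau_fuel n' a (negmod r a) i
  end.
Definition tau (r a i : nat) : nat := tau_fuel r r a i.

(* A torus-invariant divisor on a resolution is recorded by its coefficient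
   on each ray (ray given by its generator vector). *)
Definition divisor := vec -> nat.

Definition Ddiv (r a k : nat) : divisor := fun v => nat_of_bool (v == pt r a k).

Definition Zdiv (r a i : nat) : divisor :=
  fun v => \sum_((tau r a i).+1 <= k < r.+1) Ddiv r a k v.

(* rays of the Danilov resolution of 1/r(1,a,r-a): e_1 and p_0..p_r *)
Definition res_rays (r a : nat) : seq vec := e1 :: [seq pt r a k | k <- iota 0 r.+1].

Definition rL (r a : nat) := r - a.
Definition aL (r a : nat) := r %% (r - a).
Definition rR (r a : nat) := a.
Definition aR (r a : nat) := negmod r a.

(* lattice isomorphisms identifying the L- (resp. R-) cone with
   <e1,e2,p_{r-a}> (resp. <e1,e3,p_{r-a}>): fix e1, send the last
   (resp. second) basis vector to p_{r-a}, and the remaining one to e2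
   (resp. e3). *)
Definition psiL (r a : nat) (w : vec) : vec :=
  vadd (vadd (vscale w.1.1 e1) (vscale w.1.2 e2)) (vscale w.2 (pt r a (r - a))).
Definition psiR (r a : nat) (w : vec) : vec :=
  vadd (vadd (vscale w.1.1 e1) (vscale w.1.2 (pt r a (r - a)))) (vscale w.2 e3).

(* restrictions of a divisor on the resolution of 1/r(1,a,r-a) to the
   L-/R-resolution, read in the coordinates of the subcone's lattice *)
Definition restrL (r a : nat) (Z : divisor) : divisor := fun w => Z (psiL r a w).
Definition restrR (r a : nat) (Z : divisor) : divisor := fun w => Z (psiR r a w).

Definition ZLdiv (r a i : nat) : divisor := Zdiv (rL r a) (aL r a) i.
Definition ZRdiv (r a i : nat) : divisor := Zdiv (rR r a) (aR r a) i.

Definition Lbrick (r a i s : nat) : Prop :=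
  [/\ i < r - a, r < i + s.+1 * (r - a) & forall t, t <= s -> i + t * (r - a) < r].
Definition Rbrick (r a i s : nat) : Prop :=
  [/\ i < a, r < i + s.+1 * a & forall t, t <= s -> i + t * a < r].

From mathcomp Require Import all_boot all_order all_algebra.
From mathcomp Require Import zify ring.
Set Implicit Arguments. Unset Strict Implicit. Unset Printing Implicit Defensive.
Import GRing.Theory Num.Theory.

(* The coefficient of Z_j on the ray through p_k is [tau(r,a,j) < k], and e_1
   carries no coefficient.  The first coordinate of p_k is x/r where x < r is
   characterised by r | a x + k; with this, the lattice maps psiL and psiR send
   p^L_k to p_k and p^R_k to p_{r-a+k}.  The top j = i + s(r-a) of an L-brick
   lies in [a, r) and is congruent to i mod r-a, the bottom i of an R-brick is
   below a, and the recursion defining tau (which also holds in the base cases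
   a = 1 and a = r-1) gives tau(r,a,j) = tau^L(i), resp.
   tau(r,a,i) = (r-a) + tau^R(i); shifting by r-a matches p^R_k with p_{r-a+k}. *)

Lemma negmod_lt n t : 0 < t -> negmod n t < t.
Proof. by move=> t0; rewrite /negmod ltn_mod. Qed.

Lemma negmod_dvd n t : 0 < t -> t %| negmod n t + n.
Proof.
move=> t0; rewrite /negmod /dvdn modnDml {2}(divn_eq n t) addnCA subnK ?modnMDl ?modnn //.
by rewrite ltnW // ltn_mod.
Qed.

Lemma negmod_unique n t x : x < t -> t %| x + n -> negmod n t = x.
Proof.
move=> xt /dvdnP [q Hq]; rewrite /negmod.
have t0 : 0 < t by lia.
rewrite -(modn_small xt); apply/eqP.
rewrite -(eqn_modDr n) Hq modnMl -modnDmr subnK ?modnn //.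
by rewrite ltnW // ltn_mod.
Qed.

Lemma modinvP r a : 0 < r -> coprime a r -> a * modinv r a = 1 %[mod r].
Proof.
move=> r0 co; case: (posnP a) => [a0|a0].
  by move: co; rewrite a0 /coprime gcd0n => /eqP ->; rewrite !modn1.
have ex : has (fun b => (a * b) %% r == 1 %% r) (iota 0 r).
  case: (egcdnP r a0) => km kn E _.
  apply/hasP; exists (km %% r); first by rewrite mem_iota ltn_mod r0.
  by rewrite modnMmr mulnC E (eqP co) modnMDl.
rewrite /modinv; move: (nth_find 0 ex); rewrite nth_iota ?add0n; first by move/eqP.
by move: ex; rewrite has_find size_iota.
Qed.

Section Modinv.
Variables (r a : nat).
Hypotheses (r0 : 0 < r) (co : coprime a r).

Lemma dvdn_negmod_modinv k : r %| a * negmod (k * modinv r a) r + k.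
Proof.
have kE : k = a * modinv r a * k %[mod r] by rewrite -modnMml (modinvP r0 co) modnMml mul1n.
rewrite /dvdn -modnDmr kE modnDmr -mulnA (mulnC _ k) -mulnDr -modnMmr.
by rewrite (eqP (negmod_dvd _ r0)) muln0 mod0n.
Qed.

Lemma negmod_modinv k x : x < r -> r %| a * x + k -> negmod (k * modinv r a) r = x.
Proof.
move=> xr dx; apply: negmod_unique => //.
have : r %| modinv r a * (a * x + k) by rewrite dvdn_mull.
rewrite /dvdn mulnDr mulnA (mulnC (modinv r a) a) -modnDml -modnMml (modinvP r0 co).
by rewrite modnMml mul1n modnDml mulnC.
Qed.
End Modinv.

Lemma coprime_negmodl n t : 0 < t -> coprime (negmod n t) t = coprime n t.
Proof.
move=> t0; rewrite /negmod /coprime !gcdn_modl -(gcdn_modl n).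
have tE : t = n %% t + (t - n %% t) by rewrite subnKC // ltnW // ltn_mod.
set x := n %% t in tE *.
by rewrite {2}tE gcdnDr gcdnC -gcdnDl -tE.
Qed.

Lemma coprime_mod_subn a r : a <= r -> coprime (r %% (r - a)) (r - a) = coprime a r.
Proof.
move=> ar; rewrite /coprime gcdn_modl gcdnC.
have rE : r = a + (r - a) by rewrite subnKC.
by rewrite {2}rE gcdnDr gcdnC -gcdnDl -rE.
Qed.

Lemma subcone_L_admissible r a : a < r -> coprime a r -> a != r - 1 ->
  [/\ 0 < r %% (r - a), r %% (r - a) < r - a & coprime (r %% (r - a)) (r - a)].
Proof.
move=> ar co ar1; have coL : coprime (r %% (r - a)) (r - a) by rewrite coprime_mod_subn // ltnW.
split=> //; last by rewrite ltn_mod subn_gt0.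
rewrite lt0n; apply: contra ar1 => /eqP aL0.
by move: coL; rewrite aL0 /coprime gcd0n => /eqP rL1; rewrite -rL1 subKn // ltnW.
Qed.

Lemma subcone_R_admissible r a : 0 < a -> coprime a r -> a != 1 ->
  [/\ 0 < negmod r a, negmod r a < a & coprime (negmod r a) a].
Proof.
move=> a0 co a1; have coR : coprime (negmod r a) a by rewrite coprime_negmodl // coprime_sym.
split=> //; last exact: negmod_lt.
rewrite lt0n; apply: contra a1 => /eqP aR0.
by move: coR; rewrite aR0 /coprime gcd0n.
Qed.

Section Subcones.
Variables (r a : nat).
Hypotheses (a0 : 0 < a) (ar : a < r) (co : coprime a r).

Let r0 : 0 < r. Proof. exact: leq_trans ar. Qed.
Let rL0 : 0 < r - a. Proof. by rewrite subn_gt0. Qed.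
Let ar' : a <= r. Proof. exact: ltnW. Qed.

Let coprime_aL : coprime (r %% (r - a)) (r - a).
Proof. by rewrite coprime_mod_subn. Qed.

Let coprime_aR : coprime (negmod r a) a.
Proof. by rewrite coprime_negmodl // coprime_sym. Qed.

Lemma negmod_modinv_center : negmod ((r - a) * modinv r a) r = 1.
Proof.
apply: negmod_modinv => //; first exact: leq_trans ar.
by rewrite muln1 subnKC.
Qed.

Lemma negmod_modinvL k : k <= r - a ->
  (r - a) * negmod (k * modinv r a) r =
  r * negmod (k * modinv (r - a) (r %% (r - a))) (r - a) + k.
Proof.
move=> kL; set rL := r - a in kL *; set nL := negmod _ rL.
have nLlt : nL < rL by exact: negmod_lt.
have : rL %| r * nL + k.
  rewrite {1}(divn_eq r rL) mulnDl -addnA dvdn_addr ?dvdn_negmod_modinv ?coprime_aL //.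
  by rewrite mulnAC dvdn_mull.
case/dvdnP=> x Hx; rewrite Hx mulnC; congr (_ * _).
apply: negmod_modinv => //.
- rewrite -(ltn_pmul2r rL0) -Hx mulnC.
  have : r * nL.+1 <= r * rL by rewrite leq_mul2l nLlt orbT.
  by rewrite mulnS; lia.
- have coLr : coprime r rL by rewrite -coprime_modl coprime_aL.
  rewrite -(Gauss_dvdr _ coLr) mulnDr mulnA (mulnC rL a) -mulnA (mulnC rL x) -Hx.
  by rewrite mulnDr mulnA (mulnC a r) -addnA -mulnDl subnKC // -mulnA -mulnDr dvdn_mulr.
Qed.

Lemma negmod_modinvR k : k <= a ->
  a * negmod ((r - a + k) * modinv r a) r =
  r * negmod (k * modinv a (negmod r a)) a + (a - k).
Proof.
move=> ka; set nR := negmod _ a.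
have nRlt : nR < a by exact: negmod_lt.
have : a %| r * nR + (a - k).
  have E : (negmod r a + r) * nR + a = r * nR + (a - k) + (negmod r a * nR + k).
    by rewrite mulnDl; lia.
  rewrite -(dvdn_addl _ (dvdn_negmod_modinv a0 coprime_aR k)) -E.
  by rewrite dvdn_addl // dvdn_mulr // negmod_dvd.
case/dvdnP=> x Hx; rewrite Hx mulnC; congr (_ * _).
apply: negmod_modinv => //.
- rewrite -(ltn_pmul2r a0) -Hx mulnC.
  have : r * nR.+1 <= r * a by rewrite leq_mul2l nRlt orbT.
  by rewrite mulnS; lia.
- have -> : a * x + (r - a + k) = r * nR.+1 by rewrite mulnC -Hx mulnS; lia.
  exact: dvdn_mulr.
Qed.

Local Open Scope ring_scope.

Let r_neq0 : r%:R != 0 :> rat. Proof. by rewrite pnatr_eq0 -lt0n. Qed.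
Let a_neq0 : a%:R != 0 :> rat. Proof. by rewrite pnatr_eq0 -lt0n. Qed.
Let rL_neq0 : r%:R - a%:R != 0 :> rat. Proof. by rewrite -natrB // pnatr_eq0 -lt0n. Qed.

Lemma pt_center : pt r a (r - a) = (r%:R^-1, a%:R / r%:R, (r - a)%:R / r%:R).
Proof. by rewrite /pt negmod_modinv_center subKn // div1r. Qed.

Lemma psiL_pt k : (k <= r - a)%N -> psiL r a (pt (r - a) (r %% (r - a)) k) = pt r a k.
Proof.
move=> kL; have := congr1 (fun n => n%:R : rat) (negmod_modinvL kL).
rewrite /psiL pt_center /pt /vadd /vscale /e1 /e2 /= natrD !natrM.
set nL := negmod _ (r - a); set n := negmod _ r => E.
have -> : n%:R = (r%:R * nL%:R + k%:R) / (r - a)%:R :> rat.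
  by rewrite -E mulrC mulKf // pnatr_eq0 -lt0n.
rewrite !natrB ?(leq_trans kL (leq_subr _ _)) //.
by congr (_, _, _); field; apply/andP.
Qed.

Lemma psiR_pt k : (k <= a)%N -> psiR r a (pt a (negmod r a) k) = pt r a (r - a + k).
Proof.
move=> ka; have := congr1 (fun n => n%:R : rat) (negmod_modinvR ka).
rewrite /psiR pt_center /pt /vadd /vscale /e1 /e3 /= natrD !natrM.
set nR := negmod _ a; set n := negmod _ r => E.
have -> : n%:R = (r%:R * nR%:R + (a - k)%:R) / a%:R :> rat by rewrite -E mulrC mulKf.
have -> : (r - (r - a + k) = a - k)%N by rewrite subnDA subKn.
rewrite natrD !natrB //.
by congr (_, _, _); field; apply/andP.
Qed.
End Subcones.

Lemma tau_fuel_ext n m r a i : 0 < a -> a < r -> coprime a r -> r <= n -> r <= m ->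
  tau_fuel n r a i = tau_fuel m r a i.
Proof.
elim: n m r a i => [|n IH] [|m] r a i a0 ar co rn rm //=; try lia.
case: ifP => // /norP [a1 ar1]; case: ifP => _.
- have [aL0 aLr coL] := subcone_L_admissible ar co ar1.
  by apply: IH => //; lia.
- have [aR0 aRa coR] := subcone_R_admissible a0 co a1.
  by congr (_ + _); apply: IH => //; lia.
Qed.

Lemma tauE r a i : 0 < a -> a < r -> coprime a r ->
  tau r a i =
  if (a == 1) || (a == r - 1) then (a * i + r - 1) %% r
  else if a <= i then tau (r - a) (r %% (r - a)) (i %% (r - a))
  else (r - a) + tau a (negmod r a) i.
Proof.
case: r => [|r] a0 ar co; first by [].
rewrite /tau /=; case: ifP => // /norP [a1 ar1]; case: ifP => _.
- have [aL0 aLr coL] := subcone_L_admissible ar co ar1.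
  by apply: tau_fuel_ext => //; lia.
- have [aR0 aRa coR] := subcone_R_admissible a0 co a1.
  by congr (_ + _); apply: tau_fuel_ext => //; lia.
Qed.

Lemma tau_ge r a j : 0 < a -> a < r -> coprime a r -> a <= j < r ->
  tau r a j = tau (r - a) (r %% (r - a)) (j %% (r - a)).
Proof.
move=> a0 ar co /andP [aj jr]; rewrite tauE // aj.
have [ar1 | ar1] := eqVneq a (r - 1).
  have [-> ->] : j = a /\ r = a.+1 by lia.
  by rewrite subSnn !modn1 addnS subn1 /= orbT addnC -mulnS modnMl.
case: ifP => // /orP [/eqP a1 | /eqP //]; subst a.
have r3 : 2 < r by move: ar1; lia.
have -> : r %% (r - 1) = 1.
  by rewrite -{1}(subnK (ltnW ar)) modnDl modn_small //; lia.
rewrite tauE ?coprime1n //; last by lia.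
rewrite eqxx /= !mul1n; have [jr1 | jr1] := ltnP j (r - 1).
- have -> : j + r - 1 = j.-1 + r by lia.
  have -> : j %% (r - 1) + (r - 1) - 1 = j.-1 + (r - 1) by rewrite modn_small //; lia.
  by rewrite !modnDr !modn_small //; lia.
- have jE : j = r - 1 by lia.
  have -> : j + r - 1 = (r - 2) + r by lia.
  by rewrite jE modnn add0n modnDr !modn_small //; lia.
Qed.

Lemma modn_predn_mul d m : 0 < m <= d -> d.-1 * m %% d = d - m.
Proof.
case/andP=> m0 md; have d0 : 0 < d := leq_trans m0 md.
rewrite -[RHS](@modn_small _ d) ?ltn_subrL ?m0 //; apply/eqP.
by rewrite -(eqn_modDr m) -mulSnr prednK // subnK ?modnMr ?modnn.
Qed.

Lemma tau_lt r a j : 0 < a -> a < r -> coprime a r -> j < a ->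
  tau r a j = (r - a) + tau a (negmod r a) j.
Proof.
move=> a0 ar co ja; rewrite tauE // leqNgt ja /=.
have [a1 | a1] := eqVneq a 1.
  have -> : j = 0 by lia.
  rewrite a1 /negmod !modn1 muln0 add0n /= (_ : tau 1 0 0 = 0) // addn0.
  by rewrite modn_small // subn1 ltn_predL (ltn_trans a0 ar).
case: ifP => // /eqP ar1.
have rE : r = a.+1 by lia.
have aRE : negmod r a = a.-1.
  by rewrite /negmod rE -addn1 modnDl !modn_small ?subn1 //; lia.
have [aR0 aRa coR] := subcone_R_admissible a0 co a1.
rewrite aRE in aR0 aRa coR *; rewrite tauE // (_ : a.-1 == a - 1) ?orbT ?subn1 //=.
have -> : (a * j + r).-1 = r.-1 * j.+1 by rewrite rE /= mulnS; lia.
have -> : (a.-1 * j + a).-1 = a.-1 * j.+1 by rewrite mulnS; lia.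
by rewrite !modn_predn_mul; lia.
Qed.

Lemma sum_nat_eq m n k : \sum_(m <= j < n) (k == j) = (m <= k < n).
Proof.
rewrite -big_mkcond /= sum1_count (eq_count (a2 := pred1 k)) => [|j]; last by rewrite /= eq_sym.
by rewrite count_uniq_mem ?iota_uniq // mem_index_iota.
Qed.

Local Open Scope ring_scope.

Lemma pt_inj r a k k' : (0 < r)%N -> (pt r a k == pt r a k') = (k == k').
Proof.
move=> r0; apply/eqP/eqP => [E|->] //.
have := congr1 snd E; rewrite /pt /= => /(congr1 (fun x : rat => x * r%:R)).
by rewrite !mulfVK ?pnatr_eq0 -?lt0n // => /eqP; rewrite eqr_nat => /eqP.
Qed.

Lemma e1_neq_pt r a k : (0 < r)%N -> (e1 == pt r a k) = false.
Proof.
move=> r0; apply/negbTE/eqP => E.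
have E3 := congr1 snd E; have E2 := congr1 (fun v : vec => v.1.2) E.
move: E2 E3; rewrite /pt /e1 /= => E2 /esym /eqP.
rewrite mulf_eq0 invr_eq0 !pnatr_eq0 -[r == 0%N]negbK -lt0n r0 orbF => /eqP k0.
by move: E2; rewrite k0 subn0 divff ?pnatr_eq0 -?lt0n.
Qed.

Lemma psiL_e1 r a : psiL r a e1 = e1.
Proof. by rewrite /psiL /vadd /vscale /e1 /e2 /= !mul0r !mulr0 !mulr1 !addr0. Qed.

Lemma psiR_e1 r a : psiR r a e1 = e1.
Proof. by rewrite /psiR /vadd /vscale /e1 /e3 /= !mul0r !mulr0 !mulr1 !addr0. Qed.

Local Close Scope ring_scope.

Lemma Zdiv_pt r a j k : 0 < r -> k <= r -> Zdiv r a j (pt r a k) = (tau r a j < k).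
Proof.
move=> r0 kr; rewrite /Zdiv /Ddiv.
under eq_bigr => k' _ do rewrite pt_inj //.
by rewrite sum_nat_eq ltnS kr andbT.
Qed.

Lemma Zdiv_e1 r a j : 0 < r -> Zdiv r a j e1 = 0.
Proof. by move=> r0; rewrite /Zdiv /Ddiv big1 // => k _; rewrite e1_neq_pt. Qed.

Lemma res_raysP r a w :
  w \in res_rays r a -> w = e1 \/ exists2 k, k <= r & w = pt r a k.
Proof.
rewrite inE => /orP [/eqP ->| /mapP [k]]; first by left.
by rewrite mem_iota ltnS => /andP [_ kr] ->; right; exists k.
Qed.

Theorem mainTheorem3 (r a : nat) (Ha0 : 0 < a) (Har : a < r) (Hco : coprime a r) :
  (forall i s, Lbrick r a i s ->
     forall w, w \in res_rays (rL r a) (aL r a) ->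
       restrL r a (Zdiv r a (i + s * (r - a))) w = ZLdiv r a i w) /\
  (forall i s, Rbrick r a i s ->
     forall w, w \in res_rays (rR r a) (aR r a) ->
       restrR r a (Zdiv r a i) w = ZRdiv r a i w).
Proof.
have r0 : 0 < r by exact: leq_trans Har.
have rL0 : 0 < r - a by rewrite subn_gt0.
rewrite /restrL /restrR /ZLdiv /ZRdiv /rL /aL /rR /aR.
split=> i s [i_lt brick_top brick_in] w /res_raysP [->|[k kr ->]].
- by rewrite psiL_e1 !Zdiv_e1.
- have jE : (i + s * (r - a)) %% (r - a) = i by rewrite addnC modnMDl modn_small.
  have j_ge : a <= i + s * (r - a) by move: brick_top; rewrite mulSnr; lia.
  have j_lt : i + s * (r - a) < r := brick_in s (leqnn s).
  rewrite psiL_pt // !Zdiv_pt ?(leq_trans kr (leq_subr _ _)) //.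
  by rewrite tau_ge ?j_ge ?j_lt // jE.
- by rewrite psiR_e1 !Zdiv_e1.
- rewrite psiR_pt // !Zdiv_pt //; last by lia.
  by rewrite tau_lt // ltn_add2l.
Qed.
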